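(* Let $\langle c^m,c^M\rangle$ be a cell of size $n$. Let $c$ be any $(n-1)$-tuple such that $c_i\in\{c^m_i,c^M_i\}$ for every $i\in[n-1]$. Then $c$ is a cubic coordinate.
   Context: A Tamari diagram of size $n$ is a word $u=u_1\cdots u_n$ of integers with $0\leq u_i\leq n-i$ and $u_{i+j}\leq u_i-j$ for all $i\in[n]$, $0\leq j\leq u_i$. A dual Tamari diagram of size $n$ is a word $v$ of integers with $0\leq v_i\leq i-1$ and $v_{i-j}\leq v_i-j$ for all $i\in[n]$, $0\leq j\leq v_i$. $(u,v)$ is a Tamari interval diagram if moreover for all $1\leq i<j\leq n$ with $j-i\leq u_i$ one has $v_j<j-i$. A cubic coordinate of size $n$ is $c\in\mathbb{Z}^{n-1}$ such that $(u,v)$ with $u_i=\max(c_i,0)$ ($i\in[n-1]$), $u_n=0$, $v_1=0$, $v_i=|\min(c_{i-1},0)|$ ($2\leq i\leq n$) is a Tamari interval diagram. For a cubic coordinate $c$ and $i\in[n-1]$, the minimal increase $\uparrow_i(c)$ is defined when there exists a cubic coordinate agreeing with $c$ outside position $i$ and with $i$-th entry $>c_i$; then $\uparrow_i(c)$ is obtained from $c$ by replacing $c_i$ by the smallest integer $t>c_i$ such that the result is a cubic coordinate. $c$ is minimal-cellular if $\uparrow_i(c)$ is defined for all $i\in[n-1]$. A cell of size $n$ is a pair $\langle c^m,c^M\rangle$ where $c^m$ is a minimal-cellular cubic coordinate of size $n$ and $c^M=\uparrow_1(\uparrow_2(\cdots(\uparrow_{n-1}(c^m))\cdots))$ (every step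 of this composition is defined). *)

(* Indices are 1-based as in the paper: c_i := nth 0 c (i-1). *)
From mathcomp Require Import all_boot all_order all_algebra.
Set Implicit Arguments. Unset Strict Implicit. Unset Printing Implicit Defensive.
Import Order.TTheory GRing.Theory Num.Theory.

Definition tamari_diagram (n : nat) (u : nat -> nat) : Prop :=
  forall i, 1 <= i <= n ->
    u i <= n - i /\ (forall j, j <= u i -> u (i + j) <= u i - j).

Definition dual_tamari_diagram (n : nat) (v : nat -> nat) : Prop :=
  forall i, 1 <= i <= n ->
    v i <= i - 1 /\ (forall j, j <= v i -> v (i - j) <= v i - j).

Definition tamari_interval_diagram (n : nat) (u v : nat -> nat) : Prop :=
  tamari_diagram n u /\ dual_tamari_diagram n v /\
  (forall i j, 1 <= i -> i < j -> j <= n -> j - i <= u i -> v j < j - i).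

Definition cube_coord (c : seq int) (i : nat) : int := nth 0%R c i.-1.

Definition u_of (n : nat) (c : seq int) (i : nat) : nat :=
  if (1 <= i) && (i < n) then
    (match cube_coord c i with Posz k => k | Negz _ => 0 end)
  else 0.

(* v_1 = 0, v_i = |min(c_{i-1}, 0)| for 2 <= i <= n *)
Definition v_of (n : nat) (c : seq int) (i : nat) : nat :=
  if (2 <= i) && (i <= n) then
    (match cube_coord c i.-1 with Posz _ => 0 | Negz k => k.+1 end)
  else 0.

Definition cubic_coordinate (n : nat) (c : seq int) : Prop :=
  size c = n.-1 /\ tamari_interval_diagram n (u_of n c) (v_of n c).

Definition set_coord (c : seq int) (i : nat) (t : int) : seq int :=
  set_nth 0%R c i.-1 t.

Definition up_defined (n : nat) (c : seq int) (i : nat) : Prop :=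
  exists c', cubic_coordinate n c' /\
    (forall k, 1 <= k <= n.-1 -> k != i -> cube_coord c' k = cube_coord c k) /\ (cube_coord c i < cube_coord c' i)%R.

Definition is_up (n : nat) (c : seq int) (i : nat) (d : seq int) : Prop :=
  up_defined n c i /\
  exists t : int, (cube_coord c i < t)%R /\ cubic_coordinate n (set_coord c i t) /\
    (forall t' : int, (cube_coord c i < t')%R -> (t' < t)%R ->
        ~ cubic_coordinate n (set_coord c i t')) /\
    d = set_coord c i t.

Definition minimal_cellular (n : nat) (c : seq int) : Prop :=
  cubic_coordinate n c /\ forall i, 1 <= i <= n.-1 -> up_defined n c i.

(* ups n k c d  <->  d = up_1(up_2(...(up_k(c))...)) with every step defined *)
Fixpoint ups (n k : nat) (c d : seq int) : Prop :=
  match k with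
  | 0 => d = c
  | k'.+1 => exists e, is_up n c k e /\ ups n k' e d
  end.

Definition cell (n : nat) (cm cM : seq int) : Prop :=
  minimal_cellular n cm /\ ups n n.-1 cm cM.

(* A cubic coordinate is the same as an integer vector c with -i <= c_i <= n - i
   whose entries are pairwise compatible in the sense of [compat] below.  The
   chain cm = D_(n-1), ..., D_0 = cM of minimal increases has D_j equal to cm up
   to position j and to cM after it, so D_a already shows that (cm_a, cM_b) is
   compatible for a < b; the pairs (cm_a, cm_b) and (cM_a, cM_b) are compatible
   since cm and cM are cubic coordinates.  For the pair (cM_a, cm_b) everything
   follows from cm_a < cM_a and cm_b < cM_b except the interval clause
   cM_a > b - a ==> cm_b >= -(b - a).  If it failed, increasing cm at position a
   (minimal cellularity) forces cm_a < b - a, and then b - a would be an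
   admissible value strictly between cm_a and cM_a at the a-th step of the
   chain, contradicting minimality; admissibility at positions q strictly
   between a and b uses the same statement for the shorter pair (q, b). *)

From mathcomp Require Import all_boot all_order all_algebra zify.
Import Order.TTheory GRing.Theory Num.Theory.

Set Implicit Arguments.
Unset Strict Implicit.
Local Open Scope ring_scope.

(* The three clauses are, for positions a < b = a + d with x = c_a and y = c_b,
   the Tamari condition on u, the dual condition on v, and the interval
   condition between u_a and v_(b+1). *)
Definition compat (d : nat) (x y : int) : Prop :=
  (d%:Z <= x -> y <= x - d%:Z) /\ (y <= - d%:Z -> y + d%:Z <= x) /\
  (d%:Z < x -> - d%:Z <= y).

Definition cubic_fun (n : nat) (f : nat -> int) : Prop :=
  (forall i, (1 <= i <= n.-1)%N -> - i%:Z <= f i <= (n - i)%N%:Z) /\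
  (forall a b, (1 <= a < b)%N -> (b <= n.-1)%N -> compat (b - a) (f a) (f b)).

Lemma u_ofE n c i : (1 <= i < n)%N -> (u_of n c i)%:Z = Num.max (cube_coord c i) 0.
Proof. by move=> i_n; rewrite /u_of i_n; case: (cube_coord c i) => k. Qed.

Lemma u_of_out n c i : ~~ (1 <= i < n)%N -> u_of n c i = 0%N.
Proof. by move=> i_n; rewrite /u_of (negbTE i_n). Qed.

Lemma v_ofE n c i : (1 <= i < n)%N -> (v_of n c i.+1)%:Z = Num.max (- cube_coord c i) 0.
Proof.
move=> i_n; rewrite /v_of (_ : (2 <= i.+1 <= n)%N = true) /=; last by lia.
by case: (cube_coord c i) => k /=; rewrite ?NegzE; lia.
Qed.

Lemma v_of_out n c i : ~~ (2 <= i <= n)%N -> v_of n c i = 0%N.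
Proof. by move=> i_n; rewrite /v_of (negbTE i_n). Qed.

Section CubicCoordinate.

Variables (n : nat) (c : seq int).

Lemma cubic_fun_of_coordinate : cubic_coordinate n c -> cubic_fun n (cube_coord c).
Proof.
case=> _ [u_tam [v_tam uv]]; split=> [i /andP[i_ge1 i_le]|a b /andP[a_ge1 ab] b_le].
  have [u_le _] := u_tam i ltac:(lia); have [v_le _] := v_tam i.+1 ltac:(lia).
  have := @u_ofE n c i ltac:(lia); have := @v_ofE n c i ltac:(lia); lia.
have ua := @u_ofE n c a ltac:(lia); have ub := @u_ofE n c b ltac:(lia).
have va := @v_ofE n c a ltac:(lia); have vb := @v_ofE n c b ltac:(lia).
split; [|split] => cmp.
- have [_ /(_ (b - a)%N)] := u_tam a ltac:(lia).
  rewrite (_ : (a + (b - a))%N = b :> nat); lia.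
- have [_ /(_ (b - a)%N)] := v_tam b.+1 ltac:(lia).
  rewrite (_ : (b.+1 - (b - a))%N = a.+1 :> nat); lia.
- have := uv a b.+1 ltac:(lia) ltac:(lia) ltac:(lia); lia.
Qed.

Hypothesis c_cubic : cubic_fun n (cube_coord c).

Lemma tamari_diagram_u_of : tamari_diagram n (u_of n c).
Proof.
have [c_bound c_compat] := c_cubic.
move=> i /andP[i_ge1 i_le]; split.
  have [i_n|i_n] := boolP (1 <= i < n)%N; last by rewrite u_of_out.
  have := u_ofE c i_n; have := c_bound i ltac:(lia); lia.
move=> j; have [->|j_pos] := posnP j; first by rewrite addn0 subn0.
move=> j_le.
have [i_n|i_n] := boolP (1 <= i < n)%N; last by rewrite u_of_out //; lia.
have [ij_n|ij_n] := boolP (1 <= i + j < n)%N; last by rewrite u_of_out.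
have := c_compat i (i + j)%N ltac:(lia) ltac:(lia).
rewrite (_ : (i + j - i)%N = j :> nat); last by lia.
have := u_ofE c i_n; have := u_ofE c ij_n; rewrite /compat; lia.
Qed.

Lemma dual_tamari_diagram_v_of : dual_tamari_diagram n (v_of n c).
Proof.
have [c_bound c_compat] := c_cubic.
case=> [|k] // /andP[_ k_lt]; have [k0|k_pos] := posnP k.
  by rewrite k0 v_of_out //; split=> // j; rewrite leqn0 => /eqP ->.
have vk := @v_ofE n c k ltac:(lia); split.
  by have := c_bound k ltac:(lia); lia.
move=> j; have [->|j_pos] := posnP j; first by rewrite !subn0.
move=> j_le; have [jk|jk] := leqP k j; first by rewrite v_of_out //; lia.
rewrite (_ : (k.+1 - j)%N = (k - j).+1 :> nat); last by lia.
have := c_compat (k - j)%N k ltac:(lia) ltac:(lia).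
rewrite (_ : (k - (k - j))%N = j :> nat); last by lia.
have := @v_ofE n c (k - j)%N ltac:(lia); rewrite /compat; lia.
Qed.

Lemma interval_u_of_v_of i j : (1 <= i)%N -> (i < j)%N -> (j <= n)%N ->
  (j - i <= u_of n c i)%N -> (v_of n c j < j - i)%N.
Proof.
have [_ c_compat] := c_cubic.
move=> i_ge1 ij j_le; have [i_n|i_n] := boolP (1 <= i < n)%N; last by rewrite u_of_out; lia.
case: j ij j_le => [|k] // ik k_lt.
have vk := @v_ofE n c k ltac:(lia); have ui := u_ofE c i_n.
have [ki|ki] := eqVneq k i; first by rewrite ki in vk *; lia.
have := c_compat i k ltac:(lia) ltac:(lia); rewrite /compat; lia.
Qed.

End CubicCoordinate.

Lemma cubic_coordinateP n c : size c = n.-1 ->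
  cubic_coordinate n c <-> cubic_fun n (cube_coord c).
Proof.
move=> size_c; split; first exact: cubic_fun_of_coordinate.
move=> c_cubic; split=> //; split; last split.
- exact: tamari_diagram_u_of.
- exact: dual_tamari_diagram_v_of.
- exact: interval_u_of_v_of.
Qed.

Definition update (f : nat -> int) (i : nat) (t : int) (p : nat) : int :=
  if p == i then t else f p.

Lemma cube_coord_set c i t p : (1 <= i)%N -> (1 <= p)%N ->
  cube_coord (set_coord c i t) p = update (cube_coord c) i t p.
Proof.
move=> i_ge1 p_ge1; rewrite /cube_coord /set_coord /update nth_set_nth /=.
by rewrite -(prednK p_ge1) -(prednK i_ge1).
Qed.

Lemma size_set_coord c i t : (1 <= i <= size c)%N -> size (set_coord c i t) = size c.
Proof. by move=> i_c; rewrite /set_coord size_set_nth; apply/maxn_idPr; lia. Qed.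

Lemma cubic_fun_eq n f g : (forall p, (1 <= p <= n.-1)%N -> f p = g p) ->
  cubic_fun n f -> cubic_fun n g.
Proof.
move=> fg [f_bound f_compat]; split=> [i i_n|a b ab b_n]; first by rewrite -fg //; apply: f_bound.
by rewrite -!fg; [apply: f_compat | lia | lia].
Qed.

Lemma cubic_fun_update n f i t : cubic_fun n f -> (1 <= i <= n.-1)%N ->
  - i%:Z <= t <= (n - i)%N%:Z ->
  (forall p, (1 <= p < i)%N -> compat (i - p) (f p) t) ->
  (forall q, (i < q <= n.-1)%N -> compat (q - i) t (f q)) ->
  cubic_fun n (update f i t).
Proof.
move=> [f_bound f_compat] i_n t_bound compat_lo compat_hi; rewrite /update.
split=> [p p_n|a b ab b_n]; first by case: eqP => [->|_]; [|apply: f_bound].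
case: eqP => [a_i|_]; case: eqP => [b_i|_]; try lia.
- by rewrite a_i; apply: compat_hi; lia.
- by rewrite b_i; apply: compat_lo; lia.
- exact: f_compat.
Qed.

Lemma up_defined_cubic_fun n c i : up_defined n c i -> exists2 g, cubic_fun n g &
  (forall p, (1 <= p <= n.-1)%N -> p != i -> g p = cube_coord c p) /\ cube_coord c i < g i.
Proof.
case=> c' [c'_cubic [c'_eq c'_gt]]; exists (cube_coord c') => //.
by have [size_c' _] := c'_cubic; apply/(cubic_coordinateP size_c').
Qed.

Lemma ups_chain n k c d : ups n k c d -> exists D : nat -> seq int,
  [/\ D k = c, D 0%N = d & forall j, (j < k)%N -> is_up n (D j.+1) j.+1 (D j)].
Proof.
elim: k c => [|k IH] c /=; first by move=> ->; exists (fun=> c).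
case=> e [c_up /IH [D [Dk D0 D_up]]].
exists (fun j => if j == k.+1 then c else D j); split=> //; first by rewrite eqxx.
move=> j jk; rewrite eqSS; have [->|jk'] := eqVneq j k; first by rewrite ifN ?Dk //; lia.
by rewrite ifN; [apply: D_up; lia | lia].
Qed.

Lemma cubic_coordinate_set n c i t : size c = n.-1 -> (1 <= i <= n.-1)%N ->
  cubic_fun n (update (cube_coord c) i t) -> cubic_coordinate n (set_coord c i t).
Proof.
move=> size_c i_n c_cubic.
have size_ct : size (set_coord c i t) = n.-1 by rewrite size_set_coord size_c.
apply/(cubic_coordinateP size_ct); apply: cubic_fun_eq c_cubic => p p_n.
by rewrite cube_coord_set //; lia.
Qed.

Section Cell.

Variables (n : nat) (cm cM : seq int) (D : nat -> seq int).
Hypotheses (cm_minimal : minimal_cellular n cm) (D_top : D n.-1 = cm) (D_bot : D 0%N = cM).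
Hypothesis D_up : forall j, (j < n.-1)%N -> is_up n (D j.+1) j.+1 (D j).

Lemma chain_coordinate j : (j <= n.-1)%N -> cubic_coordinate n (D j).
Proof.
move=> j_n; have [j_lt|->] : (j < n.-1)%N \/ j = n.-1 by lia.
  by have [_ [t [_ [D_cubic [_ ->]]]]] := D_up j_lt.
by rewrite D_top; case: cm_minimal.
Qed.

Lemma chain_cubic j : (j <= n.-1)%N -> cubic_fun n (cube_coord (D j)).
Proof.
by move=> /chain_coordinate D_cubic; have [size_D _] := D_cubic; apply/(cubic_coordinateP size_D).
Qed.

Lemma cm_cubic : cubic_fun n (cube_coord cm).
Proof. by rewrite -D_top; apply: chain_cubic. Qed.

Lemma cM_cubic : cubic_fun n (cube_coord cM).
Proof. by rewrite -D_bot; apply: chain_cubic. Qed.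

Lemma chain_below j p : (j <= n.-1)%N -> (1 <= p <= j)%N ->
  cube_coord (D j) p = cube_coord cm p.
Proof.
move Ek : (n.-1 - j)%N => k; elim: k j Ek => [|k IH] j Ek j_n p_j.
  by rewrite (_ : j = n.-1) ?D_top //; lia.
have [_ [t [_ [_ [_ ->]]]]] := D_up (j := j) ltac:(lia).
rewrite cube_coord_set /update 1?ifN; try lia.
by apply: IH; lia.
Qed.

Lemma chain_above j p : (j < p <= n.-1)%N -> cube_coord (D j) p = cube_coord cM p.
Proof.
elim: j => [|j IH] p_j; first by rewrite D_bot.
have [_ [t [_ [_ [_ D_j]]]]] := D_up (j := j) ltac:(lia).
rewrite -IH; last by lia.
by rewrite D_j cube_coord_set /update 1?ifN //; lia.
Qed.

Lemma cell_lt i : (1 <= i <= n.-1)%N -> cube_coord cm i < cube_coord cM i.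
Proof.
case: i => [|j] // j_n; have [_ [t [t_gt [_ [_ D_j]]]]] := D_up (j := j) ltac:(lia).
have below : cube_coord (D j.+1) j.+1 = cube_coord cm j.+1 by apply: chain_below; lia.
have above : cube_coord (D j) j.+1 = cube_coord cM j.+1 by apply: chain_above; lia.
by rewrite -below -above D_j cube_coord_set // /update eqxx.
Qed.

Lemma cell_gap i t : (1 <= i <= n.-1)%N -> cube_coord cm i < t -> t < cube_coord cM i ->
  ~ cubic_fun n (update (cube_coord (D i)) i t).
Proof.
case: i => [|j] // j_n t_gt t_lt D_t.
have [_ [t0 [_ [_ [t0_min D_j]]]]] := D_up (j := j) ltac:(lia).
have below : cube_coord (D j.+1) j.+1 = cube_coord cm j.+1 by apply: chain_below; lia.
have above : cube_coord (D j) j.+1 = cube_coord cM j.+1 by apply: chain_above; lia.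
apply: (t0_min t); first by rewrite below.
  by rewrite -above D_j cube_coord_set // /update eqxx in t_lt.
have [size_D _] := chain_coordinate (j := j.+1) j_n.
exact: cubic_coordinate_set.
Qed.

(* The value 0 is compatible with every entry, hence admissible at every step. *)
Lemma cM_nonpos b : (1 <= b <= n.-1)%N -> cube_coord cm b < 0 -> cube_coord cM b <= 0.
Proof.
move=> b_n cm_neg; rewrite leNgt; apply/negP => cM_pos.
apply: (cell_gap b_n cm_neg cM_pos); apply: cubic_fun_update; try lia.
- by apply: chain_cubic; lia.
- by move=> p p_b; rewrite /compat; lia.
- by move=> q q_b; rewrite /compat; lia.
Qed.

Lemma cell_no_crossing a b : (1 <= a < b)%N -> (b <= n.-1)%N ->
  (b - a)%N%:Z < cube_coord cM a -> - (b - a)%N%:Z <= cube_coord cm b.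
Proof.
move Ed : (b - a)%N => d; elim/ltn_ind: d a b Ed => d IH a b Ed ab b_n cM_a.
rewrite leNgt; apply/negP => cm_b.
have [g g_cubic [g_eq g_gt]] := up_defined_cubic_fun (cm_minimal.2 a ltac:(lia)).
have := g_cubic.2 a b ab b_n; rewrite (g_eq b) ?Ed; try lia; rewrite /compat => compat_g.
have cm_a : cube_coord cm a < d%:Z by lia.
apply: (cell_gap (i := a) _ cm_a cM_a); first by lia.
apply: cubic_fun_update; try lia; first by apply: chain_cubic; lia.
- move=> p p_a; rewrite chain_below; try lia.
  have := cm_cubic.2 p a ltac:(lia) ltac:(lia).
  have := (chain_cubic (j := a.-1) ltac:(lia)).2 p a ltac:(lia) ltac:(lia).
  rewrite chain_below ?chain_above; try lia; rewrite /compat; lia.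
- move=> q q_a; rewrite chain_above; try lia.
  have := cM_cubic.2 a q ltac:(lia) ltac:(lia); rewrite /compat.
  case: (ltngtP q b) => [q_b|b_q|->]; last by have := cM_nonpos (b := b); lia.
    have := IH (b - q)%N ltac:(lia) q b erefl ltac:(lia) b_n; lia.
  lia.
Qed.

Lemma cell_mixed_cubic f :
  (forall i, (1 <= i <= n.-1)%N -> f i = cube_coord cm i \/ f i = cube_coord cM i) ->
  cubic_fun n f.
Proof.
move=> f_mix; split=> [i i_n|a b ab b_n].
  by case: (f_mix i i_n) => ->; [apply: cm_cubic.1 | apply: cM_cubic.1].
have compat_mM : compat (b - a) (cube_coord cm a) (cube_coord cM b).
  have := (chain_cubic (j := a) ltac:(lia)).2 a b ab b_n.
  by rewrite chain_below ?chain_above //; lia.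
have := cm_cubic.2 a b ab b_n; have := cM_cubic.2 a b ab b_n.
have := cell_lt (i := a) ltac:(lia); have := cell_lt (i := b) ltac:(lia).
have := cell_no_crossing ab b_n; move: compat_mM.
by case: (f_mix a ltac:(lia)) => ->; case: (f_mix b ltac:(lia)) => ->; rewrite /compat; lia.
Qed.

End Cell.

Local Close Scope ring_scope.

Theorem theorem4p7 (n : nat) (cm cM c : seq int) :
  cell n cm cM ->
  size c = n.-1 ->
  (forall i, 1 <= i <= n.-1 -> cube_coord c i = cube_coord cm i \/ cube_coord c i = cube_coord cM i) ->
  cubic_coordinate n c.
Proof.
move=> [cm_minimal ups_cm] size_c c_mix.
have [D [D_top D_bot D_up]] := ups_chain ups_cm.
apply/(cubic_coordinateP size_c).
exact: (cell_mixed_cubic cm_minimal D_top D_bot D_up).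
Qed.
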